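(* Let $R$ be a ring, let $\mathcal C$ be a full subcategory of $\operatorname{Mod-}R$ all of whose objects are indecomposable right $R$-modules, and let $\mathcal P,\mathcal Q$ be completely prime ideals of $\mathcal C$ such that for every $A\in\operatorname{Ob}(\mathcal C)$ an endomorphism $f\colon A\to A$ is an automorphism if and only if $f\notin\mathcal P(A,A)\cup\mathcal Q(A,A)$. Assume $\mathcal C$ satisfies Condition (DSP). Let $A,B,C\in\operatorname{Ob}(\mathcal C)$ with $[C]_{\mathcal P}=[A]_{\mathcal P}$ and $[C]_{\mathcal Q}=[B]_{\mathcal Q}$. Then there exists $D\in\operatorname{Ob}(\mathcal C)$ with $A\oplus B\cong C\oplus D$. Moreover $[D]_{\mathcal P}=[B]_{\mathcal P}$ and $[D]_{\mathcal Q}=[A]_{\mathcal Q}$.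
   Context: A completely prime ideal $\mathcal P$ of a full subcategory $\mathcal C$ of $\operatorname{Mod-}R$ consists of a subgroup $\mathcal P(A,B)$ of $\operatorname{Hom}_R(A,B)$ for each pair of objects $A,B$ of $\mathcal C$ such that: (1) for all objects $A,B,C$ and morphisms $f\colon A\to B$, $g\colon B\to C$, one has $gf\in\mathcal P(A,C)$ if and only if $f\in\mathcal P(A,B)$ or $g\in\mathcal P(B,C)$; (2) $\mathcal P(A,A)\neq\operatorname{Hom}_R(A,A)$ for every object $A$. For objects $A,B$, write $[A]_{\mathcal P}=[B]_{\mathcal P}$ (''same $\mathcal P$ class'') if $\mathcal P(A,B)\ne\operatorname{Hom}_R(A,B)$ and $\mathcal P(B,A)\neq\operatorname{Hom}_R(B,A)$. $\mathcal C$ satisfies Condition (DSP) if whenever $A,B,C,D$ are right $R$-modules with $A\oplus B\cong C\oplus D$ and $A,B,C\in\operatorname{Ob}(\mathcal C)$, then $D\in\operatorname{Ob}(\mathcal C)$. *)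

From HB Require Import structures.
From mathcomp Require Import all_boot all_order all_algebra.
Set Implicit Arguments. Unset Strict Implicit. Unset Printing Implicit Defensive.
Import GRing.Theory.
Local Open Scope ring_scope.

(* Right R-modules = left modules over the converse ring R^c. *)
Definition rmod (R : pzRingType) := lmodType (GRing.converse R).

Definition rhom (R : pzRingType) (A B : rmod R) (f : A -> B) : Prop := linear f.

Definition riso (R : pzRingType) (A B : rmod R) (f : A -> B) : Prop :=
  rhom f /\ bijective f.
Definition risomorphic (R : pzRingType) (A B : rmod R) : Prop :=
  exists f : A -> B, riso f.

Definition dsum (R : pzRingType) (A B : rmod R) : rmod R := (A * B)%type.

Definition submodule (R : pzRingType) (A : rmod R) (S : A -> Prop) : Prop :=
  S 0 /\ (forall x y, S x -> S y -> S (x + y)) /\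
  (forall (r : GRing.converse R) x, S x -> S (r *: x)).

Definition indecomposable (R : pzRingType) (A : rmod R) : Prop :=
  (exists x : A, x <> 0) /\
  forall S T : A -> Prop, submodule S -> submodule T ->
    (forall x, S x -> T x -> x = 0) ->
    (forall x, exists s t, S s /\ T t /\ x = s + t) ->
    (forall x, S x -> x = 0) \/ (forall x, T x -> x = 0).

(* An assignment of a set of maps P(A,B) to each pair of modules;
   only its values on objects of the subcategory matter. *)
Definition morclass (R : pzRingType) :=
  forall A B : rmod R, (A -> B) -> Prop.

Record completely_prime_ideal (R : pzRingType) (Ob : rmod R -> Prop)
    (P : morclass R) : Prop := {
  cpi_hom : forall A B : rmod R, Ob A -> Ob B ->
    forall f : A -> B, P A B f -> rhom f;
  cpi_zero : forall A B : rmod R, Ob A -> Ob B -> P A B (fun _ => 0);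
  cpi_sub : forall A B : rmod R, Ob A -> Ob B -> forall f g : A -> B,
    P A B f -> P A B g -> P A B (fun x => f x - g x);
  cpi_prime : forall A B C : rmod R, Ob A -> Ob B -> Ob C ->
    forall (f : A -> B) (g : B -> C), rhom f -> rhom g ->
    (P A C (g \o f) <-> P A B f \/ P B C g);
  cpi_proper : forall A : rmod R, Ob A ->
    exists f : A -> A, rhom f /\ ~ P A A f
}.

Definition P_ne_hom (R : pzRingType) (P : morclass R) (A B : rmod R) : Prop :=
  exists f : A -> B, rhom f /\ ~ P A B f.

Definition same_class (R : pzRingType) (P : morclass R) (A B : rmod R) : Prop :=
  P_ne_hom P A B /\ P_ne_hom P B A.

Definition DSP (R : pzRingType) (Ob : rmod R -> Prop) : Prop :=
  forall A B C D : rmod R,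
    risomorphic (dsum A B) (dsum C D) -> Ob A -> Ob B -> Ob C -> Ob D.

From HB Require Import structures.
From mathcomp Require Import all_boot all_order all_algebra.
From Stdlib Require Import Classical_Prop FunctionalExtensionality.
Set Implicit Arguments. Unset Strict Implicit. Unset Printing Implicit Defensive.
Import GRing.Theory.
Local Open Scope ring_scope.

(* Write [[C]_P = [A]_P] and [[C]_Q = [B]_Q] through maps f : C -> A, f' : A -> C
   outside P and g : C -> B, g' : B -> C outside Q.  It suffices to find
   i : C -> A (+) B and pi : A (+) B -> C whose composite avoids P and Q: it is
   then an automorphism, so C splits off A (+) B with complement D, and D lands
   in the P-class (resp. Q-class) of a summand S as soon as the S-components of
   i or of pi lie in P (resp. Q), because 1_S minus an element of P factors
   through D.  If f'f avoids Q, take i = (f, 0) and pi = f' o pr_A; then D is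
   in the classes of B, and [B]_Q = [C]_Q = [A]_Q.  Symmetrically if g'g
   avoids P.  Otherwise f'f is in Q and g'g is in P, and i = (f, g),
   pi = f' o pr_A + g' o pr_B work, since pi o i = f'f + g'g avoids both
   ideals. *)

Section ModuleMaps.
Variable R : pzRingType.
Implicit Types X Y Z : rmod R.

Lemma rhomD X Y (f : X -> Y) : rhom f -> {morph f : u v / u + v}.
Proof. by move=> hf u v; rewrite -{1}(scale1r u) hf scale1r. Qed.

Lemma rhomB X Y (f : X -> Y) : rhom f -> {morph f : u v / u - v}.
Proof. by move=> hf u v; apply: (addIr (f v)); rewrite -rhomD // !subrK. Qed.

Lemma rhom0 X Y (f : X -> Y) : rhom f -> f 0 = 0.
Proof. by move=> hf; rewrite -(subrr 0) rhomB // subrr. Qed.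

Lemma rhom_id X : rhom (fun x : X => x).
Proof. by []. Qed.

Lemma rhom_comp X Y Z (f : X -> Y) (g : Y -> Z) :
  rhom f -> rhom g -> rhom (g \o f).
Proof. by move=> hf hg a u v; rewrite /= hf hg. Qed.

Lemma rhom_can X Y (f : X -> Y) (g : Y -> X) :
  rhom f -> cancel f g -> cancel g f -> rhom g.
Proof. by move=> hf fK gK a u v; apply: (can_inj fK); rewrite hf !gK. Qed.

Lemma rhom_inl X Y : rhom (fun x : X => ((x, 0) : dsum X Y)).
Proof. by move=> a x y; rewrite -[RHS]/(a *: x + y, a *: 0 + 0) scaler0 addr0. Qed.

Lemma rhom_inr X Y : rhom (fun y : Y => ((0, y) : dsum X Y)).
Proof. by move=> a x y; rewrite -[RHS]/(a *: 0 + 0, a *: x + y) scaler0 addr0. Qed.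

Lemma rhom_fst X Y : rhom (fun z : dsum X Y => z.1).
Proof. by []. Qed.

Lemma rhom_snd X Y : rhom (fun z : dsum X Y => z.2).
Proof. by []. Qed.

End ModuleMaps.

Definition rker (R : pzRingType) (X Y : rmod R) (p : X -> Y) (hp : rhom p) :
  {pred X} := [pred x | p x == 0].

Lemma rker_submod_closed (R : pzRingType) (X Y : rmod R) (p : X -> Y)
  (hp : rhom p) : GRing.submod_closed (rker hp).
Proof.
split; first by rewrite inE /= rhom0.
by move=> a u v; rewrite !inE /= hp => /eqP -> /eqP ->; rewrite scaler0 addr0.
Qed.

HB.instance Definition _ (R : pzRingType) (X Y : rmod R) (p : X -> Y)
  (hp : rhom p) := GRing.isSubmodClosed.Build _ _ (rker hp) (rker_submod_closed hp).

Record rker_type (R : pzRingType) (X Y : rmod R) (p : X -> Y) (hp : rhom p) :=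
  RKer {rker_val : X; rker_valP : rker_val \in rker hp}.

HB.instance Definition _ (R : pzRingType) (X Y : rmod R) (p : X -> Y)
  (hp : rhom p) := [isSub for @rker_val R X Y p hp].
HB.instance Definition _ (R : pzRingType) (X Y : rmod R) (p : X -> Y)
  (hp : rhom p) := [Choice of rker_type hp by <:].
HB.instance Definition _ (R : pzRingType) (X Y : rmod R) (p : X -> Y)
  (hp : rhom p) := [SubChoice_isSubLmodule of rker_type hp by <:].

(* The complement is ker p, with projection j = 1 - i p and inclusion k. *)
Lemma retraction_split (R : pzRingType) (X C : rmod R) (i : C -> X) (p : X -> C)
  (hi : rhom i) (hp : rhom p) (pK : cancel i p) :
  exists (D : rmod R) (j : X -> D) (k : D -> X), rhom j /\ rhom k /\
    risomorphic X (dsum C D) /\ forall x, k (j x) = x - i (p x).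
Proof.
have jP x : x - i (p x) \in rker hp by rewrite inE /= rhomB // pK subrr.
pose j x : rker_type hp := RKer (jP x).
have hj : rhom j.
  move=> a u v; apply: val_inj; rewrite /= hp hi scalerBr.
  by rewrite addrACA opprD addrA.
exists (rker_type hp), j, (@rker_val _ _ _ _ hp).
do 3!split=> //.
exists (fun x => (p x, j x)); split; first by move=> a u v; rewrite hp hj.
exists (fun y : dsum C _ => i y.1 + rker_val y.2).
  by move=> x; rewrite /= addrC subrK.
case=> c d /=; have /eqP pd := rker_valP d.
have pid : p (i c + rker_val d) = c by rewrite rhomD // pK pd addr0.
by congr pair => //; apply: val_inj; rewrite /= pid addrC addKr.
Qed.

Section CompletelyPrimeIdeal.
Variables (R : pzRingType) (Ob : rmod R -> Prop) (P : morclass R).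
Arguments P : clear implicits.
Hypothesis HP : completely_prime_ideal Ob P.
Implicit Types A B C : rmod R.

Lemma cpi_comp A B C (f : A -> B) (g : B -> C) : Ob A -> Ob B -> Ob C ->
  rhom f -> rhom g -> P A B f \/ P B C g -> P A C (g \o f).
Proof. by move=> oA oB oC hf hg /(cpi_prime HP oA oB oC hf hg). Qed.

Lemma cpi_compN A B C (f : A -> B) (g : B -> C) : Ob A -> Ob B -> Ob C ->
  rhom f -> rhom g -> ~ P A B f -> ~ P B C g -> ~ P A C (g \o f).
Proof. by move=> oA oB oC hf hg nf ng /(cpi_prime HP oA oB oC hf hg) []. Qed.

Lemma cpi_compN_factors A B C (f : A -> B) (g : B -> C) : Ob A -> Ob B -> Ob C ->
  rhom f -> rhom g -> ~ P A C (g \o f) -> ~ P A B f /\ ~ P B C g.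
Proof. by move=> oA oB oC hf hg n; split=> h; apply: n; apply: cpi_comp; tauto. Qed.

Lemma cpi_idN A : Ob A -> ~ P A A (fun x => x).
Proof.
move=> oA hid; have [f [hf nf]] := cpi_proper HP oA.
by apply: nf; apply: (cpi_comp oA oA oA (@rhom_id _ A) hf); left.
Qed.

Lemma cpi_add A B (f g : A -> B) : Ob A -> Ob B -> P A B f -> P A B g ->
  P A B (fun x => f x + g x).
Proof.
move=> oA oB pf pg.
have -> : (fun x => f x + g x) = (fun x => f x - ((fun _ => 0) x - g x)).
  by apply: functional_extensionality => x; rewrite sub0r opprK.
by do 2!apply: (cpi_sub HP) => //; apply: (cpi_zero HP).
Qed.

Lemma cpi_addNr A B (f g : A -> B) : Ob A -> Ob B -> ~ P A B f -> P A B g ->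
  ~ P A B (fun x => f x + g x).
Proof.
move=> oA oB nf pg pfg; apply: nf.
have -> : f = (fun x => (fun x => f x + g x) x - g x).
  by apply: functional_extensionality => x; rewrite addrK.
exact: (cpi_sub HP).
Qed.

Lemma cpi_addNl A B (f g : A -> B) : Ob A -> Ob B -> P A B f -> ~ P A B g ->
  ~ P A B (fun x => f x + g x).
Proof.
move=> oA oB pf ng.
have -> : (fun x => f x + g x) = (fun x => g x + f x).
  by apply: functional_extensionality => x; rewrite addrC.
exact: cpi_addNr.
Qed.

Lemma cpi_id_subN A (h : A -> A) : Ob A -> P A A h -> ~ P A A (fun x => x - h x).
Proof.
move=> oA ph pd; apply: (cpi_idN oA).
have -> : (fun x : A => x) = (fun x => (x - h x) + h x).
  by apply: functional_extensionality => x; rewrite subrK.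
exact: (cpi_add (f := fun x => x - h x)).
Qed.

Lemma same_class_sym A B : same_class P A B -> same_class P B A.
Proof. by case. Qed.

Lemma same_class_trans A B C : Ob A -> Ob B -> Ob C ->
  same_class P A B -> same_class P B C -> same_class P A C.
Proof.
move=> oA oB oC [[f [hf nf]] [f' [hf' nf']]] [[g [hg ng]] [g' [hg' ng']]].
by split; [exists (g \o f) | exists (f' \o g')];
  split; [apply: rhom_comp | apply: cpi_compN | apply: rhom_comp | apply: cpi_compN].
Qed.

Lemma same_class_of_comp A C (f : C -> A) (f' : A -> C) : Ob A -> Ob C ->
  rhom f -> rhom f' -> ~ P C C (f' \o f) -> same_class P C A.
Proof.
move=> oA oC hf hf' /(cpi_compN_factors oC oA oC hf hf') [nf nf'].
by split; [exists f | exists f'].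
Qed.

(* 1_S - (v i)(be pi u) = (v k)(j u) lies outside P because (v i)(be pi u) is
   in P; hence both factors through D avoid P. *)
Lemma same_class_complement (C D S X : rmod R) (oC : Ob C) (oD : Ob D) (oS : Ob S)
  (i : C -> X) (pi : X -> C) (be : C -> C) (j : X -> D) (k : D -> X)
  (u : S -> X) (v : X -> S) :
  rhom i -> rhom pi -> rhom be -> rhom j -> rhom k -> rhom u -> rhom v ->
  cancel u v -> (forall x, k (j x) = x - i (be (pi x))) ->
  P C S (v \o i) \/ P S C (pi \o u) -> same_class P D S.
Proof.
move=> hi hpi hbe hj hk hu hv uK kj hyp.
have hbpu : rhom (be \o (pi \o u)) by do 2!apply: rhom_comp.
have hvi : rhom (v \o i) by apply: rhom_comp.
have inP : P S S ((v \o i) \o (be \o (pi \o u))).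
  apply: cpi_comp => //; case: hyp => [h|h]; [by right | left].
  by apply: cpi_comp => //; [apply: rhom_comp | left].
have := cpi_id_subN oS inP.
have -> : (fun s => s - ((v \o i) \o (be \o (pi \o u))) s) = (v \o k) \o (j \o u).
  by apply: functional_extensionality => s /=; rewrite kj rhomB // uK.
case/(cpi_compN_factors oS oD oS (rhom_comp hu hj) (rhom_comp hk hv)) => n1 n2.
by split; [exists (v \o k) | exists (j \o u)]; split=> //; apply: rhom_comp.
Qed.

End CompletelyPrimeIdeal.

Section Exchange.
Variables (R : pzRingType) (Ob : rmod R -> Prop) (P Q : morclass R).
Arguments P : clear implicits.
Arguments Q : clear implicits.
Hypotheses (HP : completely_prime_ideal Ob P) (HQ : completely_prime_ideal Ob Q).
Hypothesis Haut : forall A : rmod R, Ob A -> forall f : A -> A, rhom f ->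
  (riso f <-> ~ (P A A f \/ Q A A f)).
Hypothesis Hdsp : DSP Ob.
Variables (A B C : rmod R).
Hypotheses (HA : Ob A) (HB : Ob B) (HC : Ob C).

Definition exchange_complement (D : rmod R) : Prop :=
  Ob D /\ risomorphic (dsum A B) (dsum C D) /\
  same_class P D B /\ same_class Q D A.

Lemma complement_of_retract (i : C -> dsum A B) (pi : dsum A B -> C) :
  rhom i -> rhom pi -> ~ P C C (pi \o i) -> ~ Q C C (pi \o i) ->
  exists D, Ob D /\ risomorphic (dsum A B) (dsum C D) /\
    forall M : morclass R, completely_prime_ideal Ob M ->
    forall (S : rmod R) (u : S -> dsum A B) (v : dsum A B -> S),
      Ob S -> rhom u -> rhom v -> cancel u v ->
      M C S (v \o i) \/ M S C (pi \o u) -> same_class M D S.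
Proof.
move=> hi hpi nP nQ; have hpii := rhom_comp hi hpi.
have [_ [be piiK beK]] : riso (pi \o i) by apply/Haut; tauto.
have hbe := rhom_can hpii piiK beK.
have [D [j [k [hj [hk [iso kj]]]]]] :=
  retraction_split hi (rhom_comp hpi hbe) piiK.
have oD : Ob D := Hdsp iso HA HB HC.
exists D; do 2!split=> //; move=> M HM S u v oS hu hv uK.
exact: (same_class_complement HM HC oD oS hi hpi hbe hj hk hu hv uK kj).
Qed.

Lemma exchange_through_A (f : C -> A) (f' : A -> C) :
  rhom f -> rhom f' -> ~ P C C (f' \o f) -> ~ Q C C (f' \o f) ->
  same_class Q C B -> exists D, exchange_complement D.
Proof.
move=> hf hf' nP nQ QCB.
have [D [oD [iso cl]]] := complement_of_retract
  (rhom_comp hf (@rhom_inl _ A B)) (rhom_comp (@rhom_fst _ A B) hf') nP nQ.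
have class_B M (HM : completely_prime_ideal Ob M) : same_class M D B.
  exact: cl HM B _ _ HB (@rhom_inr _ A B) (@rhom_snd _ A B) (fun=> erefl)
    (or_introl (cpi_zero HM HC HB)).
exists D; do 3!split=> //; first exact: class_B.
apply: (same_class_trans HQ oD HB HA (class_B Q HQ)).
apply: (same_class_trans HQ HB HC HA (same_class_sym QCB)).
exact: (same_class_of_comp HQ HA HC hf hf' nQ).
Qed.

Lemma exchange_through_B (g : C -> B) (g' : B -> C) :
  rhom g -> rhom g' -> ~ P C C (g' \o g) -> ~ Q C C (g' \o g) ->
  same_class P C A -> exists D, exchange_complement D.
Proof.
move=> hg hg' nP nQ PCA.
have [D [oD [iso cl]]] := complement_of_retract
  (rhom_comp hg (@rhom_inr _ A B)) (rhom_comp (@rhom_snd _ A B) hg') nP nQ.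
have class_A M (HM : completely_prime_ideal Ob M) : same_class M D A.
  exact: cl HM A _ _ HA (@rhom_inl _ A B) (@rhom_fst _ A B) (fun=> erefl)
    (or_introl (cpi_zero HM HC HA)).
exists D; do 3!split=> //; last exact: class_A.
apply: (same_class_trans HP oD HA HB (class_A P HP)).
apply: (same_class_trans HP HA HC HB (same_class_sym PCA)).
exact: (same_class_of_comp HP HB HC hg hg' nP).
Qed.

Lemma exchange_cross (f : C -> A) (f' : A -> C) (g : C -> B) (g' : B -> C) :
  rhom f -> rhom f' -> rhom g -> rhom g' ->
  ~ P C C (f' \o f) -> Q C C (f' \o f) -> P C C (g' \o g) -> ~ Q C C (g' \o g) ->
  exists D, exchange_complement D.
Proof.
move=> hf hf' hg hg' nPff Qff Pgg nQgg.
pose i c : dsum A B := (f c, g c).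
pose pi (z : dsum A B) := f' z.1 + g' z.2.
have hi : rhom i by move=> a u v; rewrite /i hf hg.
have hpi : rhom pi.
  move=> a x y; rewrite /pi.
  rewrite -[(a *: x + y).1]/(a *: x.1 + y.1) -[(a *: x + y).2]/(a *: x.2 + y.2).
  by rewrite hf' hg' scalerDr addrACA.
have nP : ~ P C C (pi \o i) := cpi_addNr HP HC HC nPff Pgg.
have nQ : ~ Q C C (pi \o i) := cpi_addNl HQ HC HC Qff nQgg.
have [D [oD [iso cl]]] := complement_of_retract hi hpi nP nQ.
have PB : P C B g \/ P B C (pi \o (fun b => ((0, b) : dsum A B))).
  have -> : pi \o (fun b => ((0, b) : dsum A B)) = g'.
    by apply: functional_extensionality => b; rewrite /comp /pi /= rhom0 // add0r.
  exact/(cpi_prime HP HC HB HC hg hg').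
have QA : Q C A f \/ Q A C (pi \o (fun a => ((a, 0) : dsum A B))).
  have -> : pi \o (fun a => ((a, 0) : dsum A B)) = f'.
    by apply: functional_extensionality => a; rewrite /comp /pi /= (rhom0 hg') addr0.
  exact/(cpi_prime HQ HC HA HC hf hf').
exists D; do 3!split=> //.
  exact: (cl P HP B _ _ HB (@rhom_inr _ A B) (@rhom_snd _ A B) (fun=> erefl) PB).
exact: (cl Q HQ A _ _ HA (@rhom_inl _ A B) (@rhom_fst _ A B) (fun=> erefl) QA).
Qed.

End Exchange.

Theorem lemma2p2 (R : pzRingType) (Ob : rmod R -> Prop) (P Q : morclass R)
  (Hind : forall A : rmod R, Ob A -> indecomposable A)
  (HP : completely_prime_ideal Ob P) (HQ : completely_prime_ideal Ob Q)
  (Haut : forall A : rmod R, Ob A -> forall f : A -> A, rhom f ->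
            (riso f <-> ~ (P A A f \/ Q A A f)))
  (Hdsp : DSP Ob)
  (A B C : rmod R) (HA : Ob A) (HB : Ob B) (HC : Ob C)
  (HCA : same_class P C A) (HCB : same_class Q C B) :
  exists D : rmod R, Ob D /\ risomorphic (dsum A B) (dsum C D) /\
    same_class P D B /\ same_class Q D A.
Proof.
have [[f [hf nPf]] [f' [hf' nPf']]] := HCA.
have [[g [hg nQg]] [g' [hg' nQg']]] := HCB.
have nPff := cpi_compN HP HC HA HC hf hf' nPf nPf'.
have nQgg := cpi_compN HQ HC HB HC hg hg' nQg nQg'.
suff [D hD] : exists D, exchange_complement Ob P Q A B C D by exists D.
case: (classic (Q C C (f' \o f))) => [Qff | nQff].
  case: (classic (P C C (g' \o g))) => [Pgg | nPgg].
    exact: (exchange_cross HP HQ Haut Hdsp HA HB HC hf hf' hg hg' nPff Qff Pgg nQgg).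
  exact: (exchange_through_B HP HQ Haut Hdsp HA HB HC hg hg' nPgg nQgg HCA).
exact: (exchange_through_A HP HQ Haut Hdsp HA HB HC hf hf' nPff nQff HCB).
Qed.
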